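(* Let $Q=(q_1,\ldots,q_k)$ be an instance of the FIFO stack-up problem, let $n$ be the total number of bins in $Q$, and let $(Q,Q_0),(Q,Q_1),\ldots,(Q,Q_n)$ with $Q_0=Q$ and $Q_n=(\emptyset,\ldots,\emptyset)$ be a processing of $Q$ with $p$ stack-up places (i.e. $|\mathit{open}(Q,Q_i)|\le p$ for all $0\le i\le n$). Then the sequence $\mathcal{X}=(\mathit{open}(Q,Q_0),\ldots,\mathit{open}(Q,Q_n))$ is a directed path-decomposition of the sequence graph $G_Q$ of width at most $p-1$.
   Context: A bin $b$ carries a pallet symbol $\mathit{plt}(b)$ (a positive integer); bin $b$ is destined for pallet $\mathit{plt}(b)$. An instance is a list $Q=(q_1,\ldots,q_k)$ of finite sequences of bins, all bins (across all sequences) pairwise distinct; it is assumed that for every pallet symbol occurring, the sequences together contain at least two bins destined for it. $\mathit{plts}(Q)$ is the set of pallet symbols of all bins in $Q$. A subsequence of $q=(b_1,\ldots,b_n)$ is a suffix $q'=(b_j,\ldots,b_n)$, $j\ge 1$ (possibly empty), and $q-q'=(b_1,\ldots,b_{j-1})$. A configuration is a pair $(Q,Q')$ with $Q'=(q'_1,\ldots,q'_k)$, each $q'_j$ a subsequence of $q_j$. A pallet $t$ is open in $(Q,Q')$ if some bin destined for $t$ lies in some $q'_i$ and some bin destined for $t$ lies in some $q_j-q'_j$; $\mathit{open}(Q,Q')$ denotes the set of open pallets. A transformation step removes the first bin of one nonempty $q'_i$. A processing of $Q$ is a sequence of configurations $(Q,Q_0),\ldots,(Q,Q_n)$ with $Q_0=Q$,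 $Q_n$ consisting of $k$ empty sequences, each obtained from the previous by one transformation step; it uses $p$ stack-up places if every configuration has at most $p$ open pallets. The sequence graph $G_Q=(V,E)$ has $V=\mathit{plts}(Q)$ and an arc $(u,v)$ iff $u\ne v$ and some sequence $q_i$ contains a bin destined for $u$ at a position strictly before a bin destined for $v$. A directed path-decomposition of a digraph $G=(V,E)$ is a sequence $(X_1,\ldots,X_r)$ of subsets of $V$ with: (1) $X_1\cup\cdots\cup X_r=V$; (2) for every arc $(u,v)\in E$ there are $i\le j$ with $u\in X_i$, $v\in X_j$; (3) if $u\in X_i$ and $u\in X_j$ with $i\le j$ then $u\in X_l$ for all $i\le l\le j$. Its width is $\max_i |X_i|-1$. *)

From mathcomp Require Import all_boot all_order all_algebra.
Set Implicit Arguments. Unset Strict Implicit. Unset Printing Implicit Defensive.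

Section FIFO.
Variables (B : eqType) (plt : B -> nat).

Definition is_instance (Q : seq (seq B)) : Prop :=
  [/\ uniq (flatten Q),
      forall b, b \in flatten Q -> 0 < plt b &
      forall b, b \in flatten Q ->
        2 <= count (fun b' => plt b' == plt b) (flatten Q)].

Definition plts (Q : seq (seq B)) : seq nat := undup (map plt (flatten Q)).

(* q - q' for a subsequence (suffix) q' of q. *)
Definition seq_minus (q q' : seq B) : seq B := take (size q - size q') q.

Definition is_open (Q Q' : seq (seq B)) (t : nat) : bool :=
  has (fun i => has (fun b => plt b == t) (nth [::] Q' i)) (iota 0 (size Q)) &&
  has (fun j => has (fun b => plt b == t) (seq_minus (nth [::] Q j) (nth [::] Q' j)))
      (iota 0 (size Q)).

Definition open_plts (Q Q' : seq (seq B)) : seq nat :=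
  [seq t <- plts Q | is_open Q Q' t].

Definition trans_step (Q1 Q2 : seq (seq B)) : Prop :=
  exists i b s, nth [::] Q1 i = b :: s /\ Q2 = set_nth [::] Q1 i s.

Definition processing (Q : seq (seq B)) (Ps : seq (seq (seq B))) : Prop :=
  [/\ 0 < size Ps,
      nth [::] Ps 0 = Q,
      nth [::] Ps (size Ps).-1 = nseq (size Q) [::] &
      forall i, i.+1 < size Ps -> trans_step (nth [::] Ps i) (nth [::] Ps i.+1)].

Definition seq_arc (Q : seq (seq B)) (u v : nat) : Prop :=
  u != v /\ exists2 q, q \in Q &
    exists b1 b2 s1 s2 s3, q = s1 ++ b1 :: s2 ++ b2 :: s3 /\ plt b1 = u /\ plt b2 = v.

End FIFO.


(* Directed path-decomposition of a digraph with vertex set V and arc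
   relation E; bags are finite sets of vertices given as lists. *)
Definition dir_path_decomp (V : seq nat) (E : nat -> nat -> Prop)
    (Xs : seq (seq nat)) : Prop :=
  [/\ (forall v, v \in V <-> exists2 X, X \in Xs & v \in X),
      (forall u v, E u v -> exists i j,
          [/\ i <= j, j < size Xs, u \in nth [::] Xs i & v \in nth [::] Xs j]) &
      (forall u i j l, i <= l -> l <= j -> j < size Xs ->
          u \in nth [::] Xs i -> u \in nth [::] Xs j -> u \in nth [::] Xs l)].

(* width = max_i |X_i| - 1 (as an integer; sets counted without repetition) *)
Definition pd_width (Xs : seq (seq nat)) : int :=
  ((\max_(X <- Xs) size (undup X))%:Z - 1)%R.

From mathcomp Require Import all_boot all_order all_algebra.
From mathcomp Require Import zify.
Import Num.Theory.

Set Implicit Arguments.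
Unset Strict Implicit.
Unset Printing Implicit Defensive.

(* For a pallet t let r_i be the number of bins for t still waiting in Q_i.
   Bins of t are removed one at a time, so r_i decreases from the total
   number T >= 2 of such bins to 0 in unit steps, and t is open exactly when
   0 < r_i < T.  Hence the steps where t is open form an interval, and this
   interval is nonempty (r_i passes through T - 1).  For an arc (u, v) coming
   from a bin b1 of u before a bin b2 of v in some q_j, look at the step
   where the last bin of v is taken: v is open there (r_i = 1 < T), and b2
   has been reached, so b1 is already processed and u has been opened at
   that step or before. *)

Lemma has_flatten (T : Type) (a : pred T) (ss : seq (seq T)) :
  has a (flatten ss) = has (has a) ss.
Proof. by elim: ss => //= s ss IHss; rewrite has_cat IHss. Qed.

Lemma descent_crossing (r : nat -> nat) j v :
  (forall i, i < j -> r i <= (r i.+1).+1) -> r j < v -> v <= r 0 ->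
  exists2 i, i < j & v <= r i /\ r i.+1 = v.-1.
Proof.
elim: j => [|j IHj] step lt_rj le_vr0; first by lia.
have [rj_lt|v_le_rj] := ltnP (r j) v.
  have step' i : i < j -> r i <= (r i.+1).+1 by move=> lt_ij; apply: step; lia.
  have [i lt_ij hi] := IHj step' rj_lt le_vr0.
  by exists i => //; apply: ltnW.
by exists j => //; have := step j (ltnSn j); lia.
Qed.

Lemma pd_width_le (Xs : seq (seq nat)) p :
  (forall X, X \in Xs -> size X <= p) -> (pd_width Xs <= p%:Z - 1)%R.
Proof.
move=> hXs; rewrite /pd_width lerD2r lez_nat.
apply/bigmax_leqP_seq => X hX _.
exact: leq_trans (size_undup X) (hXs X hX).
Qed.

Section Configurations.

Variables (B : eqType) (plt : B -> nat).
Implicit Types Q : seq (seq B).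

Definition destined (t : nat) : pred B := fun b => plt b == t.

Definition nbins (Q : seq (seq B)) t := count (destined t) (flatten Q).

Definition configuration (Q Q' : seq (seq B)) : Prop :=
  size Q' = size Q /\ forall m, suffix (nth [::] Q' m) (nth [::] Q m).

Definition processed (Q Q' : seq (seq B)) : seq (seq B) :=
  mkseq (fun m => seq_minus (nth [::] Q m) (nth [::] Q' m)) (size Q).

Lemma configuration_refl Q : configuration Q Q.
Proof. by split=> // m; apply: suffix_refl. Qed.

Lemma configuration_trans Q1 Q2 Q3 :
  configuration Q1 Q2 -> configuration Q2 Q3 -> configuration Q1 Q3.
Proof.
move=> [sz12 suf12] [sz23 suf23]; split; first by rewrite sz23.
by move=> m; apply: suffix_trans (suf23 m) (suf12 m).
Qed.

Lemma seq_minusE (q q' : seq B) :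
  suffix q' q -> seq_minus q q' = take (size q - size q') q /\
                 q' = drop (size q - size q') q.
Proof. by rewrite suffixE => /eqP. Qed.

Lemma seq_minusK (q q' : seq B) : suffix q' q -> seq_minus q q' ++ q' = q.
Proof. by case/seq_minusE=> -> {2}->; apply: cat_take_drop. Qed.

Lemma mem_seq_minus_precedes (s1 s2 s3 q' : seq B) b1 b2
    (q := s1 ++ b1 :: s2 ++ b2 :: s3) :
  suffix q' q -> b2 \notin behead q' -> b1 \in seq_minus q q'.
Proof.
case/seq_minusE=> ->; set c := _ - _ => ->.
rewrite -drop1 drop_drop add1n.
case: (ltnP (size s1) c) => [lt_s1_c _ | le_c_s1].
  rewrite take_cat ltnNge (ltnW lt_s1_c) mem_cat.
  have -> : c - size s1 = (c - size s1).-1.+1 by lia.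
  by rewrite /= inE eqxx orbT.
rewrite /q -cat_rcons drop_cat size_rcons ltnS.
by case: ltngtP le_c_s1 => // [_ _ | ->]; rewrite ?subnn ?drop0 !mem_cat inE eqxx !orbT.
Qed.

Lemma is_openE Q Q' t : size Q' = size Q ->
  is_open plt Q Q' t =
  has (destined t) (flatten Q') && has (destined t) (flatten (processed Q Q')).
Proof.
move=> szQ'; rewrite !has_flatten -[X in has _ X && _](mkseq_nth [::] Q') szQ'.
by rewrite /processed /mkseq !has_map.
Qed.

Lemma count_config Q Q' (a : pred B) : configuration Q Q' ->
  count a (flatten Q) = count a (flatten (processed Q Q')) + count a (flatten Q').
Proof.
move=> [szQ' suf]; rewrite -[in LHS](mkseq_nth [::] Q).
rewrite -[X in _ + count a (flatten X)](mkseq_nth [::] Q') szQ'.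
rewrite /processed /mkseq !count_flatten -!map_comp !sumnE !big_map -big_split.
by apply: eq_bigr => m _ /=; rewrite -count_cat seq_minusK.
Qed.

Lemma mem_open_plts Q Q' t : configuration Q Q' ->
  (t \in open_plts plt Q Q') =
  (t \in plts plt Q) && (0 < count (destined t) (flatten Q') < nbins Q t).
Proof.
move=> cfg; rewrite mem_filter is_openE; last by case: cfg.
rewrite !has_count /nbins (count_config _ cfg) andbC; congr (_ && _); lia.
Qed.

Lemma trans_stepE Q1 Q2 : trans_step Q1 Q2 ->
  exists L b s R, Q1 = L ++ (b :: s) :: R /\ Q2 = L ++ s :: R.
Proof.
case=> i [b [s [hi ->]]].
have lt_i : i < size Q1.
  by rewrite ltnNge; apply/negP => /(nth_default [::]); rewrite hi.
exists (take i Q1), b, s, (drop i.+1 Q1); rewrite set_nthE lt_i; split=> //.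
by rewrite -[LHS](cat_take_drop i) (drop_nth [::] lt_i) hi.
Qed.

Lemma nth_trans_step Q1 Q2 : trans_step Q1 Q2 ->
  size Q2 = size Q1 /\
  forall m, nth [::] Q2 m = nth [::] Q1 m \/ nth [::] Q2 m = behead (nth [::] Q1 m).
Proof.
case/trans_stepE=> L [b [s [R [-> ->]]]]; split; first by rewrite !size_cat.
move=> m; rewrite !nth_cat; case: ltnP => _; last case: (m - size L) => /=; by [left | right].
Qed.

Lemma trans_step_config Q1 Q2 : trans_step Q1 Q2 -> configuration Q1 Q2.
Proof.
case/nth_trans_step=> szQ2 hnth; split=> // m.
case: (hnth m) => ->; first exact: suffix_refl.
by case: (nth _ _ _) => //= ? ?; apply: suffix_cons.
Qed.

Lemma count_trans_step Q1 Q2 (a : pred B) : trans_step Q1 Q2 ->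
  count a (flatten Q1) <= (count a (flatten Q2)).+1.
Proof.
case/trans_stepE=> L [b [s [R [-> ->]]]].
rewrite !flatten_cat !count_cat /=.
by have := leq_b1 (a b); lia.
Qed.

End Configurations.

Section Processing.

Variables (B : eqType) (plt : B -> nat) (Q : seq (seq B)) (Ps : seq (seq (seq B))).
Hypothesis processingPs : processing Q Ps.
Hypothesis nbins_ge2 : forall t, t \in plts plt Q -> 1 < nbins plt Q t.

Let P i := nth [::] Ps i.
Let N := (size Ps).-1.
Let X := [seq open_plts plt Q Qi | Qi <- Ps].
Let rest t i := count (destined plt t) (flatten (P i)).

Lemma processing_config i l : i <= l -> l < size Ps -> configuration (P i) (P l).
Proof.
case: processingPs => _ _ _ step; elim: l => [|l IHl] le_il lt_l.
  by move: le_il; rewrite leqn0 => /eqP ->; apply: configuration_refl.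
case: ltngtP le_il => // [lt_il|<-] _; last exact: configuration_refl.
by apply: configuration_trans (IHl lt_il (ltnW lt_l)) (trans_step_config (step l lt_l)).
Qed.

Lemma config_of_processing i : i < size Ps -> configuration Q (P i).
Proof. by case: processingPs => _ <- _ _; apply: processing_config. Qed.

Lemma lt_N_size : N < size Ps.
Proof. by case: processingPs => sz _ _ _; rewrite prednK. Qed.

Lemma rest0 t : rest t 0 = nbins plt Q t.
Proof. by case: processingPs => _ P0 _ _; rewrite /rest /P P0. Qed.

Lemma restN t : rest t N = 0.
Proof.
case: processingPs => _ _ PN _.
by rewrite /rest /P /N PN count_flatten map_nseq sumn_nseq.
Qed.

Lemma rest_step t i : i < N -> rest t i <= (rest t i.+1).+1.
Proof.
move=> lt_iN; have lt_i1 : i.+1 < size Ps by have := lt_N_size; lia.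
case: processingPs => _ _ _ step.
exact: count_trans_step (step i lt_i1).
Qed.

Lemma rest_antimono t i l : i <= l -> l < size Ps -> rest t l <= rest t i.
Proof.
by move=> le_il lt_l; rewrite /rest (count_config _ (processing_config le_il lt_l)) leq_addl.
Qed.

Lemma mem_bag t i : i < size Ps ->
  (t \in nth [::] X i) = (t \in plts plt Q) && (0 < rest t i < nbins plt Q t).
Proof.
by move=> lt_i; rewrite (nth_map [::]) // (mem_open_plts plt t (config_of_processing lt_i)).
Qed.

Lemma bag_before t j : t \in plts plt Q -> j < size Ps -> rest t j < nbins plt Q t ->
  exists2 i, i <= j & t \in nth [::] X i.
Proof.
move=> tQ lt_j lt_rest.
have step i : i < j -> rest t i <= (rest t i.+1).+1.
  by move=> lt_ij; apply: rest_step; have := lt_N_size; lia.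
have [i lt_ij [_ rest_i1]] := descent_crossing step lt_rest (eq_leq (esym (rest0 t))).
exists i.+1 => //; rewrite mem_bag ?(leq_ltn_trans lt_ij) // tQ rest_i1.
by have := nbins_ge2 tQ; lia.
Qed.

Lemma rest_last_bin u v (s1 s2 s3 : seq B) b1 b2 j :
  s1 ++ b1 :: s2 ++ b2 :: s3 \in Q -> plt b1 = u -> plt b2 = v ->
  j < N -> rest v j.+1 = 0 -> rest u j < nbins plt Q u.
Proof.
set q := s1 ++ b1 :: s2 ++ b2 :: s3 => qQ <- <- lt_jN rest0_j1.
have lt_j1 : j.+1 < size Ps by have := lt_N_size; lia.
have [_ sufPj] := config_of_processing (ltnW lt_j1).
set m := index q Q; have lt_m : m < size Q by rewrite index_mem.
have Qm : nth [::] Q m = q by rewrite nth_index.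
have b2_Pj1 : b2 \notin nth [::] (P j.+1) m.
  apply/negP => b2_in; suff: 0 < rest (plt b2) j.+1 by rewrite rest0_j1.
  rewrite /rest -has_count; apply/hasP; exists b2; last exact: eqxx.
  apply/flattenP; exists (nth [::] (P j.+1) m) => //; apply: mem_nth.
  by case: (config_of_processing lt_j1) => ->.
have b2_behead : b2 \notin behead (nth [::] (P j) m).
  case: processingPs => _ _ _ step; case/nth_trans_step: (step j lt_j1) => _ /(_ m).
  by case=> e; move: b2_Pj1; rewrite /P e //; apply: contra; apply: mem_behead.
have suf_q : suffix (nth [::] (P j) m) q by rewrite -Qm; apply: sufPj.
have b1_done := mem_seq_minus_precedes suf_q b2_behead.
rewrite /rest /nbins (count_config _ (config_of_processing (ltnW lt_j1))).
rewrite -{1}[count _ (flatten (P j))]add0n ltn_add2r -has_count.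
apply/hasP; exists b1; last exact: eqxx.
apply/flattenP; exists (seq_minus q (nth [::] (P j) m)) => //.
rewrite -Qm /processed /mkseq; apply/mapP; exists m => //.
by rewrite mem_iota add0n lt_m.
Qed.

Lemma bags_cover t : t \in plts plt Q -> exists2 Y, Y \in X & t \in Y.
Proof.
move=> tQ; have lt_restN : rest t N < nbins plt Q t.
  by rewrite restN (ltnW (nbins_ge2 tQ)).
have [i le_iN t_Xi] := bag_before tQ lt_N_size lt_restN.
exists (nth [::] X i) => //; apply: mem_nth.
by rewrite size_map (leq_ltn_trans le_iN lt_N_size).
Qed.

Lemma bags_arc u v : seq_arc plt Q u v -> exists i j,
  [/\ i <= j, j < size X, u \in nth [::] X i & v \in nth [::] X j].
Proof.
move=> [_ [q qQ [b1 [b2 [s1 [s2 [s3 [eq_q [b1u b2v]]]]]]]]]; subst q.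
have mem_plts w b : b \in s1 ++ b1 :: s2 ++ b2 :: s3 -> plt b = w -> w \in plts plt Q.
  move=> bq <-; rewrite mem_undup; apply: map_f; apply/flattenP.
  by exists (s1 ++ b1 :: s2 ++ b2 :: s3).
have uQ : u \in plts plt Q by apply: (mem_plts u b1 _ b1u); rewrite mem_cat inE eqxx orbT.
have vQ : v \in plts plt Q by apply: (mem_plts v b2 _ b2v); rewrite !(mem_cat, inE) eqxx !orbT.
have lt_restN : rest v N < 1 by rewrite restN.
have le_1_rest0 : 1 <= rest v 0 by rewrite rest0 (ltnW (nbins_ge2 vQ)).
have [j lt_jN [rest_j rest_j1]] := descent_crossing (@rest_step v) lt_restN le_1_rest0.
have lt_j : j < size Ps by have := lt_N_size; lia.
have [i le_ij u_Xi] := bag_before uQ lt_j (rest_last_bin qQ b1u b2v lt_jN rest_j1).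
exists i, j; split=> //; first by rewrite size_map.
by rewrite mem_bag // vQ; have := rest_step v lt_jN; have := nbins_ge2 vQ; lia.
Qed.

Lemma bags_interval t i j l : i <= l -> l <= j -> j < size X ->
  t \in nth [::] X i -> t \in nth [::] X j -> t \in nth [::] X l.
Proof.
move=> le_il le_lj; rewrite size_map => lt_j.
have lt_l := leq_ltn_trans le_lj lt_j; have lt_i := leq_ltn_trans le_il lt_l.
rewrite !mem_bag // => /and3P [tQ _ lt_rest_i] /and3P [_ pos_rest_j _]; rewrite tQ.
by have := rest_antimono t le_il lt_l; have := rest_antimono t le_lj lt_j; lia.
Qed.

Lemma processing_dir_path_decomp : dir_path_decomp (plts plt Q) (seq_arc plt Q) X.
Proof.
split; [move=> t; split | exact: bags_arc | move=> t i j l; exact: bags_interval].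
  exact: bags_cover.
by move=> [_ /mapP [Qi _ ->]]; rewrite mem_filter => /andP [].
Qed.

End Processing.

Theorem theorem1 (B : eqType) (plt : B -> nat) (Q : seq (seq B))
    (Ps : seq (seq (seq B))) (p : nat) :
  is_instance plt Q ->
  processing Q Ps ->
  size Ps = (size (flatten Q)).+1 ->
  (forall i, i < size Ps -> size (open_plts plt Q (nth [::] Ps i)) <= p) ->
  dir_path_decomp (plts plt Q) (seq_arc plt Q)
      [seq open_plts plt Q Qi | Qi <- Ps] /\
  (pd_width [seq open_plts plt Q Qi | Qi <- Ps] <= p%:Z - 1)%R.
Proof.
move=> [_ _ two_bins] processingPs _ bounded.
have nbins_ge2 t : t \in plts plt Q -> 1 < nbins plt Q t.
  by rewrite mem_undup => /mapP [b bQ ->]; apply: two_bins.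
split; first exact: processing_dir_path_decomp.
apply: pd_width_le => _ /mapP [Qi QiPs ->].
by rewrite -(nth_index [::] QiPs); apply: bounded; rewrite index_mem.
Qed.
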